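(* Let $B$ be a nonzero real vector space, $\lfloor\cdot,\cdot\rfloor$ a symmetric bilinear form on $B$, $q(b):=\tfrac12\lfloor b,b\rfloor$. Let $f\colon B\to\,]{-}\infty,\infty]$ be proper and convex, with $f\ge q$ on $B$ and ${\cal P}_q(f)\ne\emptyset$. Then ${\cal P}_q(f)$ is a $q$--positive subset of $B$.
   Context: ${\cal P}_q(f):=\{b\in B\colon f(b)=q(b)\}$. A subset $A$ is $q$--positive if $A\neq\emptyset$ and $q(b-c)\ge0$ for all $b,c\in A$. *)

From HB Require Import structures.
From mathcomp Require Import all_boot all_order all_algebra.
From mathcomp Require Import boolp classical_sets reals constructive_ereal ereal.
Set Implicit Arguments. Unset Strict Implicit. Unset Printing Implicit Defensive.
Import Order.TTheory GRing.Theory Num.Theory.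
Local Open Scope classical_set_scope.
Local Open Scope ring_scope.

(* bf is a symmetric bilinear form on B (linearity in the second argument
   follows from symmetry). *)
Definition sym_bilinear (R : realType) (B : lmodType R) (bf : B -> B -> R) : Prop :=
  [/\ (forall a b c : B, bf (a + b) c = bf a c + bf b c),
      (forall (r : R) (a c : B), bf (r *: a) c = r * bf a c) &
      (forall a c : B, bf a c = bf c a)].

Definition qform (R : realType) (B : lmodType R) (bf : B -> B -> R) (b : B) : R :=
  2^-1 * bf b b.

Definition proper_fun (R : realType) (B : lmodType R) (f : B -> \bar R) : Prop :=
  (forall b, f b != -oo%E) /\ (exists b, f b != +oo%E).

Definition convex_fun (R : realType) (B : lmodType R) (f : B -> \bar R) : Prop :=
  forall (b c : B) (t : R), 0 < t < 1 ->
    let x : B := (1 - t) *: b + t *: c in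
    (f x <= (1 - t)%:E * f b + t%:E * f c)%E.

Definition Pq (R : realType) (B : lmodType R) (q : B -> R) (f : B -> \bar R) : set B :=
  [set b | f b = (q b)%:E].

Definition q_positive (R : realType) (B : lmodType R) (q : B -> R) (A : set B) : Prop :=
  A !=set0 /\ (forall b c, A b -> A c -> 0 <= q (b - c)).

(* On a segment the quadratic form q deviates from the chord by exactly
   [t (1 - t) q(b - c)].  If f is convex, lies above q and touches q at b and c,
   then q on the segment stays below the chord of f, which is the chord of q;
   hence [q(b - c) >= 0]. *)
From HB Require Import structures.
From mathcomp Require Import all_boot all_order all_algebra.
From mathcomp Require Import boolp classical_sets reals constructive_ereal ereal.
From mathcomp Require Import lra.
Set Implicit Arguments. Unset Strict Implicit. Unset Printing Implicit Defensive.
Import Order.TTheory GRing.Theory Num.Theory.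
Local Open Scope classical_set_scope.
Local Open Scope ring_scope.

Section SymBilinear.
Variables (R : realType) (B : lmodType R) (bf : B -> B -> R).
Hypothesis bf_sym : sym_bilinear bf.

Lemma sym_bilinearDl (a b c : B) : bf (a + b) c = bf a c + bf b c.
Proof. by case: bf_sym. Qed.

Lemma sym_bilinearZl (r : R) (a c : B) : bf (r *: a) c = r * bf a c.
Proof. by case: bf_sym. Qed.

Lemma sym_bilinearC (a c : B) : bf a c = bf c a.
Proof. by case: bf_sym. Qed.

Lemma sym_bilinearDr (a b c : B) : bf a (b + c) = bf a b + bf a c.
Proof. by rewrite sym_bilinearC sym_bilinearDl !(sym_bilinearC a). Qed.

Lemma sym_bilinearZr (r : R) (a c : B) : bf a (r *: c) = r * bf a c.
Proof. by rewrite sym_bilinearC sym_bilinearZl sym_bilinearC. Qed.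

Lemma qform_convex_comb (t : R) (b c : B) :
  qform bf ((1 - t) *: b + t *: c) =
  (1 - t) * qform bf b + t * qform bf c - t * (1 - t) * qform bf (b - c).
Proof.
rewrite -scaleN1r /qform.
rewrite !(sym_bilinearDl, sym_bilinearDr, sym_bilinearZl, sym_bilinearZr).
rewrite (sym_bilinearC c b).
move: (bf b b) (bf b c) (bf c c) => x y z.
lra.
Qed.

Lemma qform_sub_ge0_of_convex_contact (f : B -> \bar R) (b c : B) :
  convex_fun f -> (forall x, ((qform bf x)%:E <= f x)%E) ->
  f b = (qform bf b)%:E -> f c = (qform bf c)%:E ->
  0 <= qform bf (b - c).
Proof.
move=> f_cvx f_ge_q fb fc.
have half01 : 0 < (2^-1 : R) < 1 by apply/andP; split; lra.
have := le_trans (f_ge_q _) (f_cvx b c _ half01).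
rewrite fb fc -!EFinM -EFinD lee_fin qform_convex_comb.
lra.
Qed.

End SymBilinear.

Theorem lemma3p17 (R : realType) (B : lmodType R) (bf : B -> B -> R)
  (f : B -> \bar R) :
  (exists b : B, b != 0) ->
  sym_bilinear bf ->
  proper_fun f ->
  convex_fun f ->
  (forall b, ((qform bf b)%:E <= f b)%E) ->
  Pq (qform bf) f !=set0 ->
  q_positive (qform bf) (Pq (qform bf) f).
Proof.
move=> _ bf_sym _ f_cvx f_ge_q Pq_ne0; split=> // b c Pb Pc.
exact: (qform_sub_ge0_of_convex_contact bf_sym f_cvx f_ge_q Pb Pc).
Qed.
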